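(* Let $(X,Y)$ be distributed according to an $(\alpha,\lambda)$-locally consistent RBM with $\alpha>0$. Let $u\neq v\in V_{obs}$ be such that there is a latent node $k\in V_{lat}$ with $J_{uk}\neq0$ and $J_{vk}\ne0$, and let $S\subseteq V_{obs}\setminus\{u,v\}$. Then \[ \mathrm{Cov}^{\mathrm{avg}}(u,v\mid S)\;\ge\;\alpha^2e^{-12\lambda}. \]
   Context: A Restricted Boltzmann Machine (RBM) with $n$ observed variables $X\in\{\pm1\}^n$ (indexed by $V_{obs}=[n]$) and $m$ latent variables $Y\in\{\pm1\}^m$ (indexed by $V_{lat}=[m]$) is the distribution $\Pr[X=x,Y=y]=\frac1Z\exp(x^TJy+h^Tx+g^Ty)$, where $J\in\mathbb R^{n\times m}$, $h\in\mathbb R^n$, $g\in\mathbb R^m$ are arbitrary and $Z$ is the normalizing constant. Its edge set is $E=\{(i,j):J_{ij}\neq0\}$. The RBM is $(\alpha,\lambda)$-locally consistent if: (i) for each $j\in[m]$, either $J_{ij}\ge0$ for all $i$ or $J_{ij}\le0$ for all $i$; (ii) $|J_{ij}|\ge\alpha$ for every $(i,j)\in E$; (iii) $\sum_j|J_{ij}|+|h_i|\le\lambda$ for all $i\in[n]$; (iv) $\sum_i|J_{ij}|+|g_j|\le\lambda$ for all $j\in[m]$. For observed $u,v$ and $S\subseteq V_{obs}\setminus\{u,v\}$ with configuration $x_S$, $\mathrm{Cov}(u,v\mid X_S=x_S)=\mathbb E[X_uX_v\mid X_S=x_S]-\mathbb E[X_u\mid X_S=x_S]\,\mathbb E[X_v\mid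 X_S=x_S]$, and the average conditional covariance is $\mathrm{Cov}^{\mathrm{avg}}(u,v\mid S)=\mathbb E_{x_S}[\mathrm{Cov}(u,v\mid X_S=x_S)]$, where $x_S$ is drawn from the marginal law of $X_S$. *)

From HB Require Import structures.
From mathcomp Require Import all_boot.
From Stdlib Require Import Reals.

Set Implicit Arguments.
Unset Strict Implicit.
Unset Printing Implicit Defensive.

Lemma Rplus_assoc' : associative Rplus.
Proof. by move=> a b c; rewrite Rplus_assoc. Qed.
HB.instance Definition _ :=
  Monoid.isComLaw.Build R 0%R Rplus Rplus_assoc' Rplus_comm Rplus_0_l.

Notation "\rsum_ ( i : T ) F" := (\big[Rplus/0%R]_(i : T) F)
  (at level 41, F at level 41, i, T at level 50).
Notation "\rsum_ ( i | P ) F" := (\big[Rplus/0%R]_(i | P) F)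
  (at level 41, F at level 41, i at level 50).

Open Scope R_scope.

Definition spin (b : bool) : R := if b then 1 else -1.

Definition config (k : nat) := {ffun 'I_k -> bool}.

Section RBM.
Variables (n m : nat) (J : 'I_n -> 'I_m -> R) (h : 'I_n -> R) (g : 'I_m -> R).

Definition rbm_weight (x : config n) (y : config m) : R :=
  exp ( (\rsum_(i : 'I_n) \rsum_(j : 'I_m) spin (x i) * J i j * spin (y j))
      + (\rsum_(i : 'I_n) h i * spin (x i))
      + (\rsum_(j : 'I_m) g j * spin (y j)) ).

Definition rbm_Z : R := \rsum_(x : config n) \rsum_(y : config m) rbm_weight x y.

Definition rbm_prob (x : config n) (y : config m) : R := rbm_weight x y / rbm_Z.

Definition rbm_marg (x : config n) : R := \rsum_(y : config m) rbm_prob x y.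

Definition agree_on (S : {set 'I_n}) (x x0 : config n) : bool :=
  [forall i in S, x i == x0 i].

Definition cond_exp (S : {set 'I_n}) (x0 : config n) (f : config n -> R) : R :=
  (\rsum_(x | agree_on S x x0) rbm_marg x * f x) /
  (\rsum_(x | agree_on S x x0) rbm_marg x).

Definition cond_cov (u v : 'I_n) (S : {set 'I_n}) (x0 : config n) : R :=
  cond_exp S x0 (fun x => spin (x u) * spin (x v))
  - cond_exp S x0 (fun x => spin (x u)) * cond_exp S x0 (fun x => spin (x v)).

(* Cov^avg(u,v | S) = E_{x_S}[Cov(u,v | X_S = x_S)], with x_S the restriction to S
   of X drawn from the marginal law of X (equivalently x_S ~ marginal of X_S). *)
Definition avg_cond_cov (u v : 'I_n) (S : {set 'I_n}) : R :=
  \rsum_(x0 : config n) rbm_marg x0 * cond_cov u v S x0.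

Definition locally_consistent (alpha lambda : R) : Prop :=
  (forall j : 'I_m, (forall i : 'I_n, 0 <= J i j) \/ (forall i : 'I_n, J i j <= 0)) /\
  (forall (i : 'I_n) (j : 'I_m), J i j <> 0 -> alpha <= Rabs (J i j)) /\
  (forall i : 'I_n, (\rsum_(j : 'I_m) Rabs (J i j)) + Rabs (h i) <= lambda) /\
  (forall j : 'I_m, (\rsum_(i : 'I_n) Rabs (J i j)) + Rabs (g j) <= lambda).

End RBM.

From HB Require Import structures.
From mathcomp Require Import all_boot.
From Stdlib Require Import Reals Lra.
Open Scope R_scope.

Set Implicit Arguments.
Unset Strict Implicit.

(* Orient every latent coordinate according to the sign of its column of J
   (observed coordinates keep the order false < true).  The joint law of
   (X, Y), restricted to the event X_S = x_S, is then a log-supermodular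
   weight on a product of two-point lattices, so the FKG inequality holds;
   we derive it from the Ahlswede-Daykin four functions theorem, proved by
   induction on the number of coordinates.

   Fix all coordinates except X_u, X_v, Y_k; this partitions the configurations
   into classes of 8 points, compatible with the lattice operations.  By the
   law of total covariance, Cov(X_u, X_v) is the average of the within-class
   covariances plus the covariance of the class-conditional means.  The latter
   are increasing (Holley's inequality), so the second term is nonnegative by
   FKG.  The within-class covariance is computed explicitly: it is at least
   alpha^2 e^{-12 lambda}.  Averaging over x_S gives the theorem. *)

Section RealSums.
Variable I : finType.

Lemma rsum_le (P : pred I) (F G : I -> R) :
  (forall i, P i -> F i <= G i) -> \rsum_(i | P i) F i <= \rsum_(i | P i) G i.
Proof.
move=> H; apply: (big_ind2 (fun x y => x <= y)) => //; first lra.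
by move=> ? ? ? ? ? ?; lra.
Qed.

Lemma rsum_ge0 (P : pred I) (F : I -> R) :
  (forall i, P i -> 0 <= F i) -> 0 <= \rsum_(i | P i) F i.
Proof.
move=> H; apply: (big_ind (fun x => 0 <= x)) => //; first lra.
by move=> ? ? ? ?; lra.
Qed.

Lemma rsum_mulr (P : pred I) (F : I -> R) (c : R) :
  c * (\rsum_(i | P i) F i) = \rsum_(i | P i) (c * F i).
Proof.
apply: (big_rec2 (fun x y => c * x = y)); first ring.
by move=> i y1 y2 _ <-; ring.
Qed.

Lemma rsum_mull (P : pred I) (F : I -> R) (c : R) :
  (\rsum_(i | P i) F i) * c = \rsum_(i | P i) (F i * c).
Proof. by rewrite Rmult_comm rsum_mulr; apply: eq_bigr => i _; ring. Qed.

Lemma rsum_sub (F G : I -> R) :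
  \rsum_(i : I) (F i - G i) = \rsum_(i : I) F i - \rsum_(i : I) G i.
Proof.
apply: (big_rec3 (fun a b c => a = b - c)); first ring.
by move=> i a b c _ ->; ring.
Qed.

Lemma rsum_abs (P : pred I) (F : I -> R) :
  Rabs (\rsum_(i | P i) F i) <= \rsum_(i | P i) Rabs (F i).
Proof.
apply: (big_rec2 (fun x y => Rabs x <= y)); first by rewrite Rabs_R0; lra.
move=> i y1 y2 _ H; have := Rabs_triang (F i) y1; lra.
Qed.

Lemma rsum_ge_term (P : pred I) (F : I -> R) (j : I) :
  (forall i, P i -> 0 <= F i) -> P j -> F j <= \rsum_(i | P i) F i.
Proof.
move=> H Pj; rewrite (bigD1 j) //=.
have : 0 <= \rsum_(i | P i && (i != j)) F i.
  by apply: rsum_ge0 => i /andP[Pi _]; apply: H.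
lra.
Qed.

Lemma rsum_pos (F : I -> R) (j : I) :
  (forall i, 0 <= F i) -> 0 < F j -> 0 < \rsum_(i : I) F i.
Proof.
move=> H Fj; have := @rsum_ge_term predT F j (fun i _ => H i) isT.
rewrite big_mkcond /=; lra.
Qed.

End RealSums.

Lemma rsum_pair (T1 T2 : finType) (F : T1 * T2 -> R) :
  \rsum_(p : T1 * T2) F p = \rsum_(x : T1) \rsum_(y : T2) F (x, y).
Proof. by rewrite pair_big; apply: eq_bigr => [[]]. Qed.

Lemma exp_le x y : x <= y -> exp x <= exp y.
Proof. by case=> [H|->]; [left; apply: exp_increasing | right]. Qed.

Definition four_functions (T : finType) (mt jn : T -> T -> T) : Prop :=
  forall a b c d : T -> R,
  (forall x, 0 <= a x) -> (forall x, 0 <= b x) ->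
  (forall x, 0 <= c x) -> (forall x, 0 <= d x) ->
  (forall x y, a x * b y <= c (jn x y) * d (mt x y)) ->
  (\rsum_(x : T) a x) * (\rsum_(x : T) b x) <= (\rsum_(x : T) c x) * (\rsum_(x : T) d x).

(* The four functions inequality on the two-point lattice 0 < 1, written out
   on the values: index 0 is the bottom and 1 the top. *)
Lemma four_functions_two_point a0 a1 b0 b1 c0 c1 d0 d1 :
  0 <= a0 -> 0 <= a1 -> 0 <= b0 -> 0 <= b1 ->
  0 <= c0 -> 0 <= c1 -> 0 <= d0 -> 0 <= d1 ->
  a0 * b0 <= c0 * d0 -> a1 * b1 <= c1 * d1 ->
  a0 * b1 <= c1 * d0 -> a1 * b0 <= c1 * d0 ->
  (a0 + a1) * (b0 + b1) <= (c0 + c1) * (d0 + d1).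
Proof.
move=> ha0 ha1 hb0 hb1 hc0 hc1 hd0 hd1 h00 h11 h01 h10.
have expandL : (a0 + a1) * (b0 + b1) = a0 * b0 + a0 * b1 + a1 * b0 + a1 * b1 by ring.
have expandR : (c0 + c1) * (d0 + d1) = c0 * d0 + c0 * d1 + c1 * d0 + c1 * d1 by ring.
case: (Rle_lt_or_eq_dec 0 (c1 * d0) (Rmult_le_pos _ _ hc1 hd0)) => [cpos|c_zero].
- (* With c := c1 d0 > 0, both sides are compared after multiplication by c. *)
  set c := c1 * d0 in cpos h01 h10 expandR.
  have upper : (a0 * b0 + c) * (c + a1 * b1) <= c * ((c0 + c1) * (d0 + d1)).
    have -> : c * ((c0 + c1) * (d0 + d1)) = (c0 * d0 + c) * (c + c1 * d1)
      by rewrite /c; ring.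
    apply: Rmult_le_compat; try lra.
    + have := Rmult_le_pos _ _ ha0 hb0; lra.
    + have := Rmult_le_pos _ _ ha1 hb1; lra.
  have lower : c * ((a0 + a1) * (b0 + b1)) <= (a0 * b0 + c) * (c + a1 * b1).
    have : 0 <= (c - a0 * b1) * (c - a1 * b0) by apply: Rmult_le_pos; lra.
    have -> : (c - a0 * b1) * (c - a1 * b0) =
      (a0 * b0 + c) * (c + a1 * b1) - c * ((a0 + a1) * (b0 + b1)) by ring.
    lra.
  apply: (Rmult_le_reg_l c) => //; lra.
- (* If c1 d0 = 0, the mixed products a0 b1 and a1 b0 vanish. *)
  have := Rmult_le_pos _ _ ha0 hb1; have := Rmult_le_pos _ _ ha1 hb0.
  have := Rmult_le_pos _ _ hc0 hd1; lra.
Qed.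

Definition bool_meet (t a b : bool) := if t then a && b else a || b.
Definition bool_join (t a b : bool) := if t then a || b else a && b.

Lemma four_functions_bool t : four_functions (bool_meet t) (bool_join t).
Proof.
move=> a b c d ha hb hc hd H; rewrite !big_bool /=.
case: t H => H.
- have := four_functions_two_point (ha false) (ha true) (hb false) (hb true)
    (hc false) (hc true) (hd false) (hd true)
    (H false false) (H true true) (H false true) (H true false).
  lra.
- have := four_functions_two_point (ha true) (ha false) (hb true) (hb false)
    (hc true) (hc false) (hd true) (hd false)
    (H true true) (H false false) (H true false) (H false true).
  lra.
Qed.

Lemma four_functions_prod (T1 T2 : finType) (m1 j1 : T1 -> T1 -> T1)
    (m2 j2 : T2 -> T2 -> T2) :
  four_functions m1 j1 -> four_functions m2 j2 ->
  four_functions (T := (T1 * T2)%type)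
    (fun p q => (m1 p.1 q.1, m2 p.2 q.2)) (fun p q => (j1 p.1 q.1, j2 p.2 q.2)).
Proof.
move=> H1 H2 a b c d ha hb hc hd H; rewrite !rsum_pair.
apply: H1; try by move=> x; apply: rsum_ge0.
by move=> x y; apply: H2 => // x' y'; apply: (H (x, _) (y, _)).
Qed.

Lemma four_functions_transfer (T1 T2 : finType) (m1 j1 : T1 -> T1 -> T1)
    (m2 j2 : T2 -> T2 -> T2) (f : T1 -> T2) :
  bijective f ->
  (forall x y, f (m1 x y) = m2 (f x) (f y)) ->
  (forall x y, f (j1 x y) = j2 (f x) (f y)) ->
  four_functions m1 j1 -> four_functions m2 j2.
Proof.
move=> fbij fm fj H a b c d ha hb hc hd Hab.
have reindexf F : \rsum_(x : T2) F x = \rsum_(y : T1) F (f y).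
  by rewrite (reindex f) //; apply: onW_bij.
rewrite !reindexf; apply: H => // x y.
by rewrite fm fj.
Qed.

Definition config_meet N (t : 'I_N -> bool) (x y : config N) : config N :=
  [ffun i => bool_meet (t i) (x i) (y i)].
Definition config_join N (t : 'I_N -> bool) (x y : config N) : config N :=
  [ffun i => bool_join (t i) (x i) (y i)].

Definition config_cons N (p : bool * config N) : config N.+1 :=
  [ffun i => if unlift ord0 i is Some j then p.2 j else p.1].

Lemma config_cons_bij N : bijective (@config_cons N).
Proof.
exists (fun z : config N.+1 => (z ord0, [ffun j => z (lift ord0 j)])).
- case=> b x; rewrite /config_cons /=; congr pair.
  + by rewrite ffunE unlift_none.
  + by apply/ffunP => j; rewrite !ffunE liftK.
- move=> z; apply/ffunP => i; rewrite ffunE /=.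
  by case: unliftP => [j ->|->]; rewrite ?ffunE.
Qed.

Lemma four_functions_config N (t : 'I_N -> bool) :
  four_functions (config_meet t) (config_join t).
Proof.
elim: N t => [|N IH] t.
- have config0_eq (x y : config 0) : x = y by apply/ffunP => -[].
  move=> a b c d _ _ _ _ H.
  have sum0 F : \rsum_(x : config 0) F x = F [ffun => true].
    by apply: big_pred1 => x /=; rewrite (config0_eq x [ffun => true]) eqxx.
  set x0 : config 0 := [ffun => true].
  rewrite !sum0 -/x0; have := H x0 x0.
  by rewrite (config0_eq (config_join t x0 x0) x0) (config0_eq (config_meet t x0 x0) x0).
- have := four_functions_prod (@four_functions_bool (t ord0))
    (IH (fun j => t (lift ord0 j))).
  apply: (four_functions_transfer (config_cons_bij N)).
  + move=> [b x] [b' x']; apply/ffunP => i; rewrite !ffunE /=.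
    by case: unliftP => [j ->|->]; rewrite ?ffunE.
  + move=> [b x] [b' x']; apply/ffunP => i; rewrite !ffunE /=.
    by case: unliftP => [j ->|->]; rewrite ?ffunE.
Qed.

Section LatticeMeasure.
Variables (T : finType) (mt jn : T -> T -> T) (nu : T -> R).
Hypothesis four_fun : four_functions mt jn.
Hypothesis nu_ge0 : forall x, 0 <= nu x.
Hypothesis nu_lsm : forall x y, nu x * nu y <= nu (jn x y) * nu (mt x y).

Lemma nu_jn_pos x y : 0 < nu x -> 0 < nu y -> 0 < nu (jn x y).
Proof.
move=> px py; have := nu_lsm x y; have := Rmult_lt_0_compat _ _ px py.
case: (Rle_lt_or_eq_dec 0 (nu (jn x y)) (nu_ge0 _)) => // <-; lra.
Qed.

Lemma FKG (f g : T -> R) :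
  (forall x, 0 <= f x) -> (forall x, 0 <= g x) ->
  (forall x y, 0 < nu x -> 0 < nu y -> f x <= f (jn x y)) ->
  (forall x y, 0 < nu x -> 0 < nu y -> g y <= g (jn x y)) ->
  (\rsum_(x : T) (nu x * f x)) * (\rsum_(x : T) (nu x * g x)) <=
  (\rsum_(x : T) (nu x * (f x * g x))) * (\rsum_(x : T) nu x).
Proof.
move=> hf hg fmon gmon; apply: four_fun => [x|x|x|x|x y].
- exact: Rmult_le_pos.
- exact: Rmult_le_pos.
- by apply: Rmult_le_pos => //; apply: Rmult_le_pos.
- exact: nu_ge0.
have rhs0 : 0 <= nu (jn x y) * (f (jn x y) * g (jn x y)) * nu (mt x y).
  by do 2 apply: Rmult_le_pos => //; apply: Rmult_le_pos.
case: (Rle_lt_or_eq_dec 0 (nu x) (nu_ge0 x)) => [px|<-]; last by rewrite !Rmult_0_l.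
case: (Rle_lt_or_eq_dec 0 (nu y) (nu_ge0 y)) => [py|<-];
  last by rewrite Rmult_0_l Rmult_0_r.
have -> : nu x * f x * (nu y * g y) = (nu x * nu y) * (f x * g y) by ring.
have -> : nu (jn x y) * (f (jn x y) * g (jn x y)) * nu (mt x y) =
          (nu (jn x y) * nu (mt x y)) * (f (jn x y) * g (jn x y)) by ring.
apply: Rmult_le_compat => //.
- by apply: Rmult_le_pos; apply: nu_ge0.
- exact: Rmult_le_pos.
- by apply: Rmult_le_compat; [| | apply: fmon | apply: gmon].
Qed.

Variable eqv : T -> T -> bool.
Hypothesis eqv_refl : forall x, eqv x x.
Hypothesis eqv_sym : forall x y, eqv x y -> eqv y x.
Hypothesis eqv_trans : forall x y z, eqv x y -> eqv y z -> eqv x z.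

Definition class_mass x := \rsum_(z | eqv z x) nu z.
Definition class_moment (f : T -> R) x := \rsum_(z | eqv z x) (nu z * f z).
Definition class_mean (f : T -> R) x := class_moment f x / class_mass x.

Lemma class_mass_ge x : nu x <= class_mass x.
Proof. by apply: rsum_ge_term => // z _; apply: nu_ge0. Qed.

Lemma class_mass_ge0 x : 0 <= class_mass x.
Proof. by apply: rsum_ge0 => z _; apply: nu_ge0. Qed.

Lemma class_mean_ge0 f x : (forall z, 0 <= f z) -> 0 <= class_mean f x.
Proof.
move=> hf; rewrite /class_mean.
case: (Rle_lt_or_eq_dec 0 _ (class_mass_ge0 x)) => [p|<-].
- apply: Rmult_le_pos; first by apply: rsum_ge0 => z _; apply: Rmult_le_pos.
  by left; apply: Rinv_0_lt_compat.
- by rewrite /Rdiv Rinv_0 Rmult_0_r; right.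
Qed.

Lemma eqv_classE x y z : eqv x y -> eqv z x = eqv z y.
Proof. by move=> e; apply/idP/idP => h; [apply: eqv_trans h e | apply: eqv_trans h (eqv_sym e)]. Qed.

Lemma class_mass_eq x y : eqv x y -> class_mass x = class_mass y.
Proof. by move=> e; apply: eq_bigl => z; apply: eqv_classE. Qed.

Lemma tower f : \rsum_(x : T) (nu x * class_mean f x) = \rsum_(x : T) (nu x * f x).
Proof.
rewrite /class_mean /class_moment.
have expand x : nu x * ((\rsum_(z | eqv z x) (nu z * f z)) / class_mass x) =
    \rsum_(z : T) (if eqv z x then nu x * (nu z * f z) / class_mass x else 0).
  rewrite big_mkcond /Rdiv rsum_mull rsum_mulr; apply: eq_bigr => z _.
  by case: ifP => _; ring.
rewrite (eq_bigr _ (fun x _ => expand x)) exchange_big /=.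
apply: eq_bigr => z _.
have -> : \rsum_(x : T) (if eqv z x then nu x * (nu z * f z) / class_mass x else 0) =
    (nu z * f z) * (class_mass z / class_mass z).
  rewrite /Rdiv rsum_mull rsum_mulr [in RHS]big_mkcond; apply: eq_bigr => x _ /=.
  have -> : eqv z x = eqv x z by apply/idP/idP; apply: eqv_sym.
  by case: ifP => // e; rewrite (class_mass_eq e); ring.
case: (Rle_lt_or_eq_dec 0 _ (class_mass_ge0 z)) => [p|e].
- by rewrite /Rdiv Rinv_r ?Rmult_1_r //; lra.
- have -> : nu z = 0 by have := class_mass_ge z; have := nu_ge0 z; lra.
  by ring.
Qed.

Hypothesis eqv_lattice : forall a b c d, eqv c a -> eqv d (jn a b) ->
  eqv (jn c d) (jn a b) /\ eqv (mt c d) a.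

Lemma Holley (phi : T -> R) x y :
  (forall z, 0 <= phi z) ->
  (forall c d, 0 < nu c -> 0 < nu d -> phi c <= phi (jn c d)) ->
  class_moment phi x * class_mass (jn x y) <= class_moment phi (jn x y) * class_mass x.
Proof.
move=> hp hmon; rewrite /class_moment /class_mass !(big_mkcond (fun z => eqv z _)).
have if_ge0 b (r : R) : 0 <= r -> 0 <= if b then r else 0.
  by case: b => // _; right.
apply: four_fun => [z|z|z|z|c d] /=.
1-4: by apply: if_ge0; try apply: Rmult_le_pos.
set rhs := (if eqv (jn c d) _ then _ else 0) * (if eqv (mt c d) x then _ else 0).
have rhs0 : 0 <= rhs.
  by apply: Rmult_le_pos; apply: if_ge0; try apply: Rmult_le_pos.
case hc: (eqv c x); last by rewrite Rmult_0_l.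
case hd: (eqv d (jn x y)); last by rewrite Rmult_0_r.
move: rhs0; rewrite /rhs; case: (eqv_lattice hc hd) => -> -> rhs0.
case: (Rle_lt_or_eq_dec 0 (nu c) (nu_ge0 c)) => [pc|<-]; last by rewrite !Rmult_0_l.
case: (Rle_lt_or_eq_dec 0 (nu d) (nu_ge0 d)) => [pd|<-]; last by rewrite Rmult_0_r.
have -> : nu c * phi c * nu d = (nu c * nu d) * phi c by ring.
have -> : nu (jn c d) * phi (jn c d) * nu (mt c d) =
          (nu (jn c d) * nu (mt c d)) * phi (jn c d) by ring.
apply: Rmult_le_compat => //; last exact: hmon.
by apply: Rmult_le_pos; apply: nu_ge0.
Qed.

Lemma class_mean_mono (phi : T -> R) x y :
  (forall z, 0 <= phi z) ->
  (forall c d, 0 < nu c -> 0 < nu d -> phi c <= phi (jn c d)) ->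
  0 < nu x -> 0 < nu y -> class_mean phi x <= class_mean phi (jn x y).
Proof.
move=> hp hmon px py.
have mx : 0 < class_mass x by have := class_mass_ge x; lra.
have mxy : 0 < class_mass (jn x y).
  by have := class_mass_ge (jn x y); have := nu_jn_pos px py; lra.
have H := Holley x y hp hmon.
rewrite /class_mean; apply: (Rmult_le_reg_r (class_mass x * class_mass (jn x y))).
  exact: Rmult_lt_0_compat.
have -> : class_moment phi x / class_mass x * (class_mass x * class_mass (jn x y)) =
          class_moment phi x * class_mass (jn x y) by field; lra.
have -> : class_moment phi (jn x y) / class_mass (jn x y) *
            (class_mass x * class_mass (jn x y)) =
          class_moment phi (jn x y) * class_mass x by field; lra.
exact: H.
Qed.

Hypothesis jn_comm : forall x y, jn x y = jn y x.

(* Law of total covariance, with the covariance of the conditional means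
   bounded below by 0 (FKG) and the within-class covariances by beta:
   for increasing U, V >= 0, with N the total mass,
   beta N^2 <= N Sum nu U V - (Sum nu U)(Sum nu V). *)
Lemma total_covariance_lower_bound (U V : T -> R) beta :
  (forall z, 0 <= U z) -> (forall z, 0 <= V z) ->
  (forall c d, U c <= U (jn c d)) -> (forall c d, V c <= V (jn c d)) ->
  (forall x, 0 < nu x ->
     beta <= class_mean (fun z => U z * V z) x - class_mean U x * class_mean V x) ->
  beta * (\rsum_(x : T) nu x) * (\rsum_(x : T) nu x) <=
  (\rsum_(x : T) nu x) * (\rsum_(x : T) (nu x * (U x * V x))) -
  (\rsum_(x : T) (nu x * U x)) * (\rsum_(x : T) (nu x * V x)).
Proof.
move=> hU hV mU mV hbeta.
set N := \rsum_(x : T) nu x.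
have N0 : 0 <= N by apply: rsum_ge0 => x _; apply: nu_ge0.
rewrite -(tower (fun z => U z * V z)) -(tower U) -(tower V).
have means_FKG :
    (\rsum_(x : T) (nu x * class_mean U x)) * (\rsum_(x : T) (nu x * class_mean V x)) <=
    (\rsum_(x : T) (nu x * (class_mean U x * class_mean V x))) * N.
  apply: FKG => [x|x|x y px py|x y px py]; try exact: class_mean_ge0.
  - exact: class_mean_mono.
  - by rewrite jn_comm; apply: class_mean_mono.
have within_classes :
    beta * N <= \rsum_(x : T) (nu x * class_mean (fun z => U z * V z) x) -
                \rsum_(x : T) (nu x * (class_mean U x * class_mean V x)).
  rewrite -rsum_sub /N rsum_mulr; apply: rsum_le => x _.
  case: (Rle_lt_or_eq_dec 0 (nu x) (nu_ge0 x)) => [px|<-]; last by right; ring.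
  rewrite -Rmult_minus_distr_l Rmult_comm; apply: Rmult_le_compat_l; first lra.
  exact: hbeta.
have := Rmult_le_compat_l N _ _ N0 within_classes.
move: means_FKG; rewrite Rmult_minus_distr_l; lra.
Qed.

End LatticeMeasure.

Definition pow_spin (c : bool) (e : R) := if c then e else / e.

Lemma exp_spin c x : exp (spin c * x) = pow_spin c (exp x).
Proof.
case: c; rewrite /spin /pow_spin; first by rewrite Rmult_1_l.
by rewrite -exp_Ropp; congr exp; ring.
Qed.

Lemma spin_mul a b : spin a * spin b = spin (a == b).
Proof. by case: a; case: b; rewrite /spin /=; ring. Qed.

Lemma Rabs_spin b : Rabs (spin b) = 1.
Proof. by case: b; rewrite /spin ?Rabs_Ropp Rabs_R1. Qed.

Lemma exp_diff_lower_bound x al lam : 0 < al -> al <= Rabs x -> Rabs x <= lam ->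
  4 * al * exp (- (2 * lam)) <= Rabs (exp (2 * x) - exp (- (2 * x))).
Proof.
move=> ha h1 h2.
have nonneg_case y : al <= y -> y <= lam ->
    4 * al * exp (- (2 * lam)) <= exp (2 * y) - exp (- (2 * y)).
  move=> y1 y2.
  have -> : exp (2 * y) - exp (- (2 * y)) = exp (- (2 * y)) * (exp (4 * y) - 1).
    rewrite Rmult_minus_distr_l -exp_plus Rmult_1_r; congr (exp _ - _); ring.
  have := exp_ineq1_le (4 * y); have := exp_pos (- (2 * lam)).
  have : exp (- (2 * lam)) <= exp (- (2 * y)) by apply: exp_le; lra.
  rewrite (Rmult_comm (4 * al)); move=> *; apply: Rmult_le_compat; lra.
have pos : 0 < 4 * al * exp (- (2 * lam)).
  by apply: Rmult_lt_0_compat; [lra | apply: exp_pos].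
case: (Rle_dec 0 x) => hx.
- rewrite Rabs_right in h1 h2; try lra.
  have H := nonneg_case x h1 h2; rewrite Rabs_right; lra.
- rewrite Rabs_left1 in h1 h2; try lra.
  have := nonneg_case (- x) h1 h2.
  rewrite Ropp_mult_distr_r_reverse Ropp_involutive => H.
  rewrite Rabs_left1; lra.
Qed.

Definition sum8 (F : bool -> bool -> bool -> R) :=
  \rsum_(a : bool) \rsum_(b : bool) \rsum_(s : bool) F a b s.

Lemma eq_sum8 (F G : bool -> bool -> bool -> R) :
  (forall a b s, F a b s = G a b s) -> sum8 F = sum8 G.
Proof. by move=> FG; do 3 (apply: eq_bigr => ? _); apply: FG. Qed.

(* The spins are shifted to
   the nonnegative functions spin + 1, which does not change covariances. *)
Section EightPoint.
Variables (K Au Av Ak p q al lam : R) (w : bool -> bool -> bool -> R).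
Hypothesis al_pos : 0 < al.
Hypothesis Au_p_bound : Rabs Au + Rabs p <= lam.
Hypothesis Av_q_bound : Rabs Av + Rabs q <= lam.
Hypothesis Ak_bound : Rabs Ak <= lam.
Hypothesis p_large : al <= Rabs p.
Hypothesis q_large : al <= Rabs q.
Hypothesis pq_sign : (0 <= p /\ 0 <= q) \/ (p <= 0 /\ q <= 0).
Hypothesis wE : forall a b s, w a b s = exp (K + spin a * Au + spin b * Av + spin s * Ak
                                            + spin a * spin s * p + spin b * spin s * q).

Let C := sum8 w.
Let MU := sum8 (fun a b s => w a b s * (spin a + 1)).
Let MV := sum8 (fun a b s => w a b s * (spin b + 1)).
Let MUV := sum8 (fun a b s => w a b s * ((spin a + 1) * (spin b + 1))).

Lemma eight_cov_identity :
  C * MUV - MU * MV =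
  4 * (exp K * exp K) * ((exp (2 * p) - exp (- (2 * p))) * (exp (2 * q) - exp (- (2 * q)))).
Proof.
have e2 x : exp (2 * x) = exp x * exp x by rewrite -exp_plus; congr exp; ring.
have wpow a b s : w a b s = exp K * pow_spin a (exp Au) * pow_spin b (exp Av) *
    pow_spin s (exp Ak) * pow_spin (a == s) (exp p) * pow_spin (b == s) (exp q).
  by rewrite wE !spin_mul !exp_plus !exp_spin; ring.
have := exp_pos K; have := exp_pos Au; have := exp_pos Av; have := exp_pos Ak.
have := exp_pos p; have := exp_pos q.
rewrite /C /MU /MV /MUV /sum8 !exp_Ropp !e2 !big_bool /= !wpow /pow_spin /spin /=.
move=> *; field; repeat split; lra.
Qed.

Lemma eight_mass_bounds : 0 < C /\ C <= 8 * (exp K * exp (3 * lam)).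
Proof.
have abs_le x : x <= Rabs x /\ - x <= Rabs x.
  by split; [apply: Rle_abs | rewrite -Rabs_Ropp; apply: Rle_abs].
have [? ?] := abs_le Au; have [? ?] := abs_le Av; have [? ?] := abs_le Ak.
have [? ?] := abs_le p; have [? ?] := abs_le q.
have wpos a b s : 0 < w a b s by rewrite wE; apply: exp_pos.
have wub a b s : w a b s <= exp K * exp (3 * lam).
  rewrite wE -exp_plus; apply: exp_le.
  by case: a; case: b; case: s; rewrite /spin; lra.
split.
- rewrite /C /sum8 !big_bool /=.
  move: (wpos true true true) (wpos true true false) (wpos true false true)
    (wpos true false false) (wpos false true true) (wpos false true false)
    (wpos false false true) (wpos false false false); lra.
- have : C <= sum8 (fun _ _ _ => exp K * exp (3 * lam)).
    by do 3 (apply: rsum_le => ? _); apply: wub.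
  rewrite /sum8 !big_bool /=; lra.
Qed.

(* Product of the two sinh factors, using that p and q have the same sign. *)
Lemma sinh_product_lower_bound :
  16 * al ^ 2 * exp (- (4 * lam)) <=
  (exp (2 * p) - exp (- (2 * p))) * (exp (2 * q) - exp (- (2 * q))).
Proof.
have lam_p : Rabs p <= lam by have := Rabs_pos Au; lra.
have lam_q : Rabs q <= lam by have := Rabs_pos Av; lra.
have sp := exp_diff_lower_bound al_pos p_large lam_p.
have sq := exp_diff_lower_bound al_pos q_large lam_q.
have -> : (exp (2 * p) - exp (- (2 * p))) * (exp (2 * q) - exp (- (2 * q))) =
  Rabs (exp (2 * p) - exp (- (2 * p))) * Rabs (exp (2 * q) - exp (- (2 * q))).
  rewrite -Rabs_mult Rabs_right //; apply: Rle_ge.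
  case: pq_sign => [[p0 q0]|[p0 q0]].
  + have := exp_le (x := - (2 * p)) (y := 2 * p) ltac:(lra).
    have := exp_le (x := - (2 * q)) (y := 2 * q) ltac:(lra).
    move=> *; apply: Rmult_le_pos; lra.
  + have := exp_le (x := 2 * p) (y := - (2 * p)) ltac:(lra).
    have := exp_le (x := 2 * q) (y := - (2 * q)) ltac:(lra).
    nra.
have -> : 16 * al ^ 2 * exp (- (4 * lam)) =
    (4 * al * exp (- (2 * lam))) * (4 * al * exp (- (2 * lam))).
  have -> : - (4 * lam) = - (2 * lam) + - (2 * lam) by ring.
  by rewrite exp_plus; ring.
have := exp_pos (- (2 * lam)).
by move=> ?; apply: Rmult_le_compat => //; apply: Rmult_le_pos; lra.
Qed.

Lemma eight_cov_lower_bound : al ^ 2 * exp (- (12 * lam)) <= MUV / C - (MU / C) * (MV / C).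
Proof.
have [Cpos Cub] := eight_mass_bounds.
have lam0 : 0 <= lam by have := Rabs_pos Ak; lra.
have eK := exp_pos K; have e3 := exp_pos (3 * lam); have e12 := exp_pos (- (12 * lam)).
have al2 : 0 < al ^ 2 by apply: pow_lt.
have -> : MUV / C - MU / C * (MV / C) = (C * MUV - MU * MV) / (C * C) by field; lra.
rewrite eight_cov_identity.
set D := _ * _ * (_ * _).
apply: (Rmult_le_reg_r (C * C)); first exact: Rmult_lt_0_compat.
have -> : D / (C * C) * (C * C) = D by field; lra.
rewrite /D.
have CC : C * C <= 64 * (exp K * exp K) * (exp (3 * lam) * exp (3 * lam)).
  by have := Rmult_le_compat _ _ _ _ (Rlt_le _ _ Cpos) (Rlt_le _ _ Cpos) Cub Cub; lra.
have decay : exp (- (12 * lam)) * (exp (3 * lam) * exp (3 * lam)) <= exp (- (4 * lam)).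
  by rewrite -!exp_plus; apply: exp_le; lra.
have := sinh_product_lower_bound.
have := Rmult_le_compat_l (al ^ 2 * exp (- (12 * lam))) _ _
  ltac:(apply: Rmult_le_pos; lra) CC.
have := Rmult_le_compat_l (64 * (exp K * exp K) * al ^ 2) _ _
  ltac:(apply: Rmult_le_pos; nra) decay.
nra.
Qed.

End EightPoint.

Lemma coupling_supermodular (t : bool) (Jij : R) xa xb ya yb :
  (t -> 0 <= Jij) -> (~~ t -> Jij <= 0) ->
  spin xa * Jij * spin ya + spin xb * Jij * spin yb <=
  spin (xa || xb) * Jij * spin (bool_join t ya yb) +
  spin (xa && xb) * Jij * spin (bool_meet t ya yb).
Proof.
case: t => H1 H2; [have := H1 isT | have := H2 isT];
by case: xa; case: xb; case: ya; case: yb; rewrite /spin /bool_join /bool_meet /=; lra.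
Qed.

Section RBMLattice.
Variables (n m : nat) (J : 'I_n -> 'I_m -> R) (h : 'I_n -> R) (g : 'I_m -> R).
Hypothesis same_sign :
  forall j, (forall i, 0 <= J i j) \/ (forall i, J i j <= 0).

Definition orient (j : 'I_m) : bool :=
  [forall i, if Rle_dec 0 (J i j) then true else false].

Lemma orient_true j : orient j -> forall i, 0 <= J i j.
Proof. by move/forallP => H i; move: (H i); case: Rle_dec. Qed.

Lemma orient_false j : ~~ orient j -> forall i, J i j <= 0.
Proof.
move/forallPn => [i0]; case: Rle_dec => // Hi0 _.
by case: (same_sign j) => // H; case: Hi0; apply: H.
Qed.

Definition joint := (config n * config m)%type.
Definition joint_meet (p q : joint) : joint :=
  (config_meet (fun=> true) p.1 q.1, config_meet orient p.2 q.2).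
Definition joint_join (p q : joint) : joint :=
  (config_join (fun=> true) p.1 q.1, config_join orient p.2 q.2).

Lemma four_functions_joint : four_functions joint_meet joint_join.
Proof. exact: four_functions_prod (@four_functions_config n (fun=> true)) (@four_functions_config m orient). Qed.

Lemma joint_join_comm a b : joint_join a b = joint_join b a.
Proof.
congr pair; apply/ffunP => i; rewrite !ffunE /bool_join.
- by case: (a.1 i); case: (b.1 i).
- by case: (orient i); case: (a.2 i); case: (b.2 i).
Qed.

Definition energy (x : config n) (y : config m) : R :=
  (\rsum_(i : 'I_n) \rsum_(j : 'I_m) (spin (x i) * J i j * spin (y j)))
  + (\rsum_(i : 'I_n) (h i * spin (x i)))
  + (\rsum_(j : 'I_m) (g j * spin (y j))).

Lemma rbm_weightE x y : rbm_weight J h g x y = exp (energy x y).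
Proof. by []. Qed.

Lemma energy_supermodular a b :
  energy a.1 a.2 + energy b.1 b.2 <=
  energy (joint_join a b).1 (joint_join a b).2 + energy (joint_meet a b).1 (joint_meet a b).2.
Proof.
set jab := joint_join a b; set mab := joint_meet a b.
have couplings :
  \rsum_(i : 'I_n) \rsum_(j : 'I_m) (spin (a.1 i) * J i j * spin (a.2 j)) +
  \rsum_(i : 'I_n) \rsum_(j : 'I_m) (spin (b.1 i) * J i j * spin (b.2 j)) <=
  \rsum_(i : 'I_n) \rsum_(j : 'I_m) (spin (jab.1 i) * J i j * spin (jab.2 j)) +
  \rsum_(i : 'I_n) \rsum_(j : 'I_m) (spin (mab.1 i) * J i j * spin (mab.2 j)).
  rewrite -!big_split; apply: rsum_le => i _; rewrite -!big_split; apply: rsum_le => j _.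
  rewrite !ffunE; apply: coupling_supermodular => H.
  + exact: orient_true H i.
  + exact: orient_false H i.
have modular (F : bool -> R) (t : bool) c d :
    F c + F d = F (bool_join t c d) + F (bool_meet t c d).
  by case: t; case: c; case: d; rewrite /bool_join /bool_meet /=; ring.
have fields_x : \rsum_(i : 'I_n) (h i * spin (a.1 i)) + \rsum_(i : 'I_n) (h i * spin (b.1 i)) =
    \rsum_(i : 'I_n) (h i * spin (jab.1 i)) + \rsum_(i : 'I_n) (h i * spin (mab.1 i)).
  rewrite -!big_split; apply: eq_bigr => i _; rewrite !ffunE.
  exact: (modular (fun c => h i * spin c)).
have fields_y : \rsum_(j : 'I_m) (g j * spin (a.2 j)) + \rsum_(j : 'I_m) (g j * spin (b.2 j)) =
    \rsum_(j : 'I_m) (g j * spin (jab.2 j)) + \rsum_(j : 'I_m) (g j * spin (mab.2 j)).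
  rewrite -!big_split; apply: eq_bigr => j _; rewrite !ffunE.
  exact: (modular (fun c => g j * spin c)).
rewrite /energy; lra.
Qed.

Variables (S : {set 'I_n}) (x0 : config n).

Definition restricted_weight (p : joint) : R :=
  if agree_on S p.1 x0 then rbm_weight J h g p.1 p.2 else 0.

Lemma restricted_weight_ge0 p : 0 <= restricted_weight p.
Proof. by rewrite /restricted_weight; case: ifP => _; [left; apply: exp_pos | right]. Qed.

Lemma agree_on_lattice a b : agree_on S a.1 x0 -> agree_on S b.1 x0 ->
  agree_on S (joint_join a b).1 x0 && agree_on S (joint_meet a b).1 x0.
Proof.
move=> /forallP Ha /forallP Hb; apply/andP; split; apply/forallP => i;
apply/implyP => iS; move/implyP/(_ iS)/eqP: (Ha i) => ea;
by move/implyP/(_ iS)/eqP: (Hb i) => eb; rewrite ffunE /= ea eb; case: (x0 i).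
Qed.

Lemma restricted_weight_lsm a b :
  restricted_weight a * restricted_weight b <=
  restricted_weight (joint_join a b) * restricted_weight (joint_meet a b).
Proof.
have rhs0 := Rmult_le_pos _ _ (restricted_weight_ge0 (joint_join a b))
  (restricted_weight_ge0 (joint_meet a b)).
rewrite {1 2}/restricted_weight; case Ha: (agree_on S a.1 x0); last by rewrite Rmult_0_l.
case Hb: (agree_on S b.1 x0); last by rewrite Rmult_0_r.
case/andP: (agree_on_lattice Ha Hb) => Hj Hm.
rewrite /restricted_weight Hj Hm !rbm_weightE -!exp_plus; apply: exp_le.
exact: energy_supermodular.
Qed.

End RBMLattice.

(* The classes: configurations that agree outside X_u, X_v and Y_k.  They are
   the fibres of the map [mask] erasing these three spins, which is a lattice
   homomorphism; this gives the compatibility required for Holley's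
   inequality. *)
Section Classes.
Variables (n m : nat) (J : 'I_n -> 'I_m -> R) (h : 'I_n -> R) (g : 'I_m -> R).
Variables (u v : 'I_n) (k : 'I_m).
Hypothesis u_neq_v : u != v.

Definition outside_uv (i : 'I_n) := (i != u) && (i != v).

Definition mask (p : joint n m) : joint n m :=
  ([ffun i => outside_uv i && p.1 i], [ffun j => (j != k) && p.2 j]).

Definition same_class (p q : joint n m) : bool := mask p == mask q.

Lemma same_class_refl p : same_class p p.
Proof. exact: eqxx. Qed.

Lemma same_class_sym p q : same_class p q -> same_class q p.
Proof. by rewrite /same_class eq_sym. Qed.

Lemma same_class_trans p q r : same_class p q -> same_class q r -> same_class p r.
Proof. by rewrite /same_class => /eqP -> /eqP ->. Qed.

Lemma mask_join a b : mask (joint_join J a b) = joint_join J (mask a) (mask b).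
Proof.
congr pair; apply/ffunP => i; rewrite !ffunE /bool_join.
- by case: (outside_uv i); case: (a.1 i); case: (b.1 i).
- by case: (i != k); case: (orient J i); case: (a.2 i); case: (b.2 i).
Qed.

Lemma mask_meet a b : mask (joint_meet J a b) = joint_meet J (mask a) (mask b).
Proof.
congr pair; apply/ffunP => i; rewrite !ffunE /bool_meet.
- by case: (outside_uv i); case: (a.1 i); case: (b.1 i).
- by case: (i != k); case: (orient J i); case: (a.2 i); case: (b.2 i).
Qed.

Lemma joint_absorption a b :
  joint_join J a (joint_join J a b) = joint_join J a b /\
  joint_meet J a (joint_join J a b) = a.
Proof.
case: a => a1 a2; split; congr pair; apply/ffunP => i; rewrite !ffunE /bool_join /bool_meet /=.
1,3: by case: (a1 i); case: (b.1 i).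
all: by case: (orient J i); case: (a2 i); case: (b.2 i).
Qed.

Lemma same_class_lattice a b c d : same_class c a -> same_class d (joint_join J a b) ->
  same_class (joint_join J c d) (joint_join J a b) /\ same_class (joint_meet J c d) a.
Proof.
move=> /eqP ca /eqP db; case: (joint_absorption a b) => jabs mabs.
rewrite /same_class mask_join mask_meet ca db -mask_join -mask_meet jabs mabs.
by split.
Qed.

Definition set_spins (p : joint n m) (a b s : bool) : joint n m :=
  ([ffun i => if i == v then b else if i == u then a else p.1 i],
   [ffun j => if j == k then s else p.2 j]).

Lemma set_spins_u p a b s : (set_spins p a b s).1 u = a.
Proof. by rewrite ffunE (negbTE u_neq_v) eqxx. Qed.
Lemma set_spins_v p a b s : (set_spins p a b s).1 v = b.
Proof. by rewrite ffunE eqxx. Qed.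
Lemma set_spins_k p a b s : (set_spins p a b s).2 k = s.
Proof. by rewrite ffunE eqxx. Qed.
Lemma set_spins_obs p a b s i : outside_uv i -> (set_spins p a b s).1 i = p.1 i.
Proof. by case/andP => /negbTE iu /negbTE iv; rewrite ffunE iu iv. Qed.
Lemma set_spins_lat p a b s j : j != k -> (set_spins p a b s).2 j = p.2 j.
Proof. by move=> /negbTE jk; rewrite ffunE jk. Qed.

Lemma same_class_set_spins p a b s : same_class (set_spins p a b s) p.
Proof.
apply/eqP; congr pair; apply/ffunP => i; rewrite !ffunE.
- by case hi: (outside_uv i) => //=; case/andP: hi => /negbTE -> /negbTE ->.
- by case: eqP.
Qed.

Lemma class_sumE p (F : joint n m -> R) :
  \rsum_(z | same_class z p) F z = sum8 (fun a b s => F (set_spins p a b s)).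
Proof.
pose param (t : bool * bool * bool) := set_spins p t.1.1 t.1.2 t.2.
have param_bij : {on [pred z | same_class z p], bijective param}.
  exists (fun z : joint n m => (z.1 u, z.1 v, z.2 k)).
  - by move=> [[a b] s] _; rewrite /param set_spins_u set_spins_v set_spins_k.
  - move=> [z1 z2]; rewrite inE => /eqP [/ffunP E1 /ffunP E2].
    congr pair; apply/ffunP => i; rewrite !ffunE /=.
    + case: eqP => [->//|/eqP iv]; case: eqP => [->//|/eqP iu].
      by have := E1 i; rewrite !ffunE /outside_uv iu iv.
    + case: eqP => [->//|/eqP ik].
      by have := E2 i; rewrite !ffunE ik.
rewrite (reindex param param_bij) /=.
rewrite (eq_bigl (fun _ => true)); last by move=> t; rewrite same_class_set_spins.
by rewrite !rsum_pair.
Qed.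

Lemma sum_obs_split (F : 'I_n -> R) :
  \rsum_(i : 'I_n) F i = F u + F v + \rsum_(i | outside_uv i) F i.
Proof.
rewrite (bigD1 u) //= (bigD1 v) /=; last by rewrite eq_sym.
by rewrite Rplus_assoc.
Qed.

Lemma sum_lat_split (G : 'I_m -> R) :
  \rsum_(j : 'I_m) G j = G k + \rsum_(j | j != k) G j.
Proof. exact: bigD1. Qed.

Definition obs_field (w : 'I_n) (p : joint n m) :=
  h w + \rsum_(j | j != k) (J w j * spin (p.2 j)).
Definition lat_field (p : joint n m) :=
  g k + \rsum_(i | outside_uv i) (spin (p.1 i) * J i k).
Definition frozen_energy (p : joint n m) :=
  \rsum_(i | outside_uv i) \rsum_(j | j != k) (spin (p.1 i) * J i j * spin (p.2 j))
  + \rsum_(i | outside_uv i) (h i * spin (p.1 i))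
  + \rsum_(j | j != k) (g j * spin (p.2 j)).

Lemma row_energy_set_spins p a b s w c :
  \rsum_(j : 'I_m) (spin c * J w j * spin ((set_spins p a b s).2 j)) =
  spin c * spin s * J w k + spin c * (\rsum_(j | j != k) (J w j * spin (p.2 j))).
Proof.
rewrite sum_lat_split set_spins_k rsum_mulr; congr (_ + _); first ring.
by apply: eq_bigr => j jk; rewrite set_spins_lat //; ring.
Qed.

Lemma energy_set_spins p a b s :
  energy J h g (set_spins p a b s).1 (set_spins p a b s).2 =
  frozen_energy p + spin a * obs_field u p + spin b * obs_field v p + spin s * lat_field p
  + spin a * spin s * J u k + spin b * spin s * J v k.
Proof.
set q := set_spins p a b s.
have couplings : \rsum_(i : 'I_n) \rsum_(j : 'I_m) (spin (q.1 i) * J i j * spin (q.2 j)) =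
    spin a * spin s * J u k + spin a * (\rsum_(j | j != k) (J u j * spin (p.2 j))) +
    (spin b * spin s * J v k + spin b * (\rsum_(j | j != k) (J v j * spin (p.2 j)))) +
    (spin s * (\rsum_(i | outside_uv i) (spin (p.1 i) * J i k)) +
     \rsum_(i | outside_uv i) \rsum_(j | j != k) (spin (p.1 i) * J i j * spin (p.2 j))).
  rewrite sum_obs_split /q set_spins_u set_spins_v !row_energy_set_spins.
  congr (_ + _); rewrite rsum_mulr -big_split; apply: eq_bigr => i ui.
  rewrite sum_lat_split set_spins_obs // set_spins_k; congr (_ + _); first ring.
  by apply: eq_bigr => j jk; rewrite set_spins_lat.
have obs_fields : \rsum_(i : 'I_n) (h i * spin (q.1 i)) =
    h u * spin a + h v * spin b + \rsum_(i | outside_uv i) (h i * spin (p.1 i)).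
  rewrite sum_obs_split /q set_spins_u set_spins_v; congr (_ + _).
  by apply: eq_bigr => i ui; rewrite set_spins_obs.
have lat_fields : \rsum_(j : 'I_m) (g j * spin (q.2 j)) =
    g k * spin s + \rsum_(j | j != k) (g j * spin (p.2 j)).
  rewrite sum_lat_split /q set_spins_k; congr (_ + _).
  by apply: eq_bigr => j jk; rewrite set_spins_lat.
rewrite /energy couplings obs_fields lat_fields /frozen_energy /obs_field /lat_field; ring.
Qed.

Variable lambda : R.

Lemma obs_field_bound w p :
  \rsum_(j : 'I_m) Rabs (J w j) + Rabs (h w) <= lambda ->
  Rabs (obs_field w p) + Rabs (J w k) <= lambda.
Proof.
rewrite sum_lat_split /obs_field => row.
have := Rabs_triang (h w) (\rsum_(j | j != k) (J w j * spin (p.2 j))).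
have : Rabs (\rsum_(j | j != k) (J w j * spin (p.2 j))) <= \rsum_(j | j != k) Rabs (J w j).
  apply: Rle_trans (rsum_abs _ _) _; right.
  by apply: eq_bigr => j _; rewrite Rabs_mult Rabs_spin Rmult_1_r.
lra.
Qed.

Lemma lat_field_bound p :
  \rsum_(i : 'I_n) Rabs (J i k) + Rabs (g k) <= lambda -> Rabs (lat_field p) <= lambda.
Proof.
rewrite sum_obs_split /lat_field => col.
have := Rabs_triang (g k) (\rsum_(i | outside_uv i) (spin (p.1 i) * J i k)).
have : Rabs (\rsum_(i | outside_uv i) (spin (p.1 i) * J i k)) <=
       \rsum_(i | outside_uv i) Rabs (J i k).
  apply: Rle_trans (rsum_abs _ _) _; right.
  by apply: eq_bigr => i _; rewrite Rabs_mult Rabs_spin Rmult_1_l.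
have := Rabs_pos (J u k); have := Rabs_pos (J v k).
lra.
Qed.

End Classes.

Section ClassCovariance.
Variables (n m : nat) (J : 'I_n -> 'I_m -> R) (h : 'I_n -> R) (g : 'I_m -> R).
Variables (alpha lambda : R).
Hypothesis alpha_pos : 0 < alpha.
Hypothesis lc : locally_consistent J h g alpha lambda.
Variables (u v : 'I_n) (k : 'I_m).
Hypothesis u_neq_v : u != v.
Hypothesis Juk : J u k <> 0.
Hypothesis Jvk : J v k <> 0.
Variables (S : {set 'I_n}) (x0 : config n).
Hypothesis u_notin_S : u \notin S.
Hypothesis v_notin_S : v \notin S.

Definition shifted_spin (w : 'I_n) (z : joint n m) := spin (z.1 w) + 1.

Lemma shifted_spin_ge0 w z : 0 <= shifted_spin w z.
Proof. by rewrite /shifted_spin; case: (z.1 w); rewrite /spin; lra. Qed.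

Lemma shifted_spin_mono w c d : shifted_spin w c <= shifted_spin w (joint_join J c d).
Proof. by rewrite /shifted_spin ffunE; case: (c.1 w); case: (d.1 w); rewrite /spin /=; lra. Qed.

Let nu := restricted_weight J h g S x0.
Let same := same_class u v k.

Lemma agree_on_set_spins p a b s :
  agree_on S (set_spins u v k p a b s).1 x0 = agree_on S p.1 x0.
Proof.
apply: eq_forallb => i; case iS: (i \in S) => //=.
rewrite set_spins_obs //; apply/andP; split; apply/eqP => e;
  [move: u_notin_S | move: v_notin_S]; by rewrite -e iS.
Qed.

Lemma class_cov_bound p : 0 < nu p ->
  alpha ^ 2 * exp (- (12 * lambda)) <=
  class_mean nu same (fun z => shifted_spin u z * shifted_spin v z) p -
  class_mean nu same (shifted_spin u) p * class_mean nu same (shifted_spin v) p.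
Proof.
move=> pos_p.
have agree_p : agree_on S p.1 x0 by move: pos_p; rewrite /nu /restricted_weight; case: ifP => //; lra.
have [sign [large [rows cols]]] := lc.
pose w a b s := nu (set_spins u v k p a b s).
have wE a b s : w a b s = exp (frozen_energy J h g u v k p + spin a * obs_field J h k u p +
    spin b * obs_field J h k v p + spin s * lat_field J g u v k p +
    spin a * spin s * J u k + spin b * spin s * J v k).
  by rewrite /w /nu /restricted_weight agree_on_set_spins agree_p rbm_weightE energy_set_spins.
rewrite /class_mean /class_moment /class_mass !class_sumE //.
have -> : sum8 (fun a b s => nu (set_spins u v k p a b s) *
      (shifted_spin u (set_spins u v k p a b s) * shifted_spin v (set_spins u v k p a b s))) =
    sum8 (fun a b s => w a b s * ((spin a + 1) * (spin b + 1))).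
  by apply: eq_sum8 => a b s; rewrite /shifted_spin set_spins_u // set_spins_v.
have -> : sum8 (fun a b s => nu (set_spins u v k p a b s) * shifted_spin u (set_spins u v k p a b s)) =
    sum8 (fun a b s => w a b s * (spin a + 1)).
  by apply: eq_sum8 => a b s; rewrite /shifted_spin set_spins_u.
have -> : sum8 (fun a b s => nu (set_spins u v k p a b s) * shifted_spin v (set_spins u v k p a b s)) =
    sum8 (fun a b s => w a b s * (spin b + 1)).
  by apply: eq_sum8 => a b s; rewrite /shifted_spin set_spins_v.
apply: (eight_cov_lower_bound alpha_pos _ _ _ (large _ _ Juk) (large _ _ Jvk) _ wE).
- exact: (obs_field_bound k p (rows u)).
- exact: (obs_field_bound k p (rows v)).
- exact: (lat_field_bound u_neq_v p (cols k)).
- by case: (sign k) => H; [left | right]; split; apply: H.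
Qed.

End ClassCovariance.

Section Conditioning.
Variables (n m : nat) (J : 'I_n -> 'I_m -> R) (h : 'I_n -> R) (g : 'I_m -> R).

Lemma rbm_Z_pos : 0 < rbm_Z J h g.
Proof.
apply: (rsum_pos (j := [ffun => true])) => [x|].
- by apply: rsum_ge0 => y _; left; apply: exp_pos.
- by apply: (rsum_pos (j := [ffun => true])) => [y|]; [left|]; apply: exp_pos.
Qed.

Lemma rbm_marg_ge0 x : 0 <= rbm_marg J h g x.
Proof.
apply: rsum_ge0 => y _; apply: Rmult_le_pos; first by left; apply: exp_pos.
by left; apply: Rinv_0_lt_compat; apply: rbm_Z_pos.
Qed.

Lemma rbm_marg_total : \rsum_(x : config n) rbm_marg J h g x = 1.
Proof.
have -> : \rsum_(x : config n) rbm_marg J h g x = rbm_Z J h g * / rbm_Z J h g.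
  rewrite /rbm_Z rsum_mull; apply: eq_bigr => x _.
  by rewrite /rbm_marg /rbm_prob rsum_mull.
by apply: Rinv_r; have := rbm_Z_pos; lra.
Qed.

Variables (S : {set 'I_n}) (x0 : config n).
Let nu := restricted_weight J h g S x0.

Lemma cond_sumE (f : config n -> R) :
  \rsum_(x | agree_on S x x0) (rbm_marg J h g x * f x) =
  (\rsum_(z : joint n m) (nu z * f z.1)) / rbm_Z J h g.
Proof.
rewrite /Rdiv rsum_mull rsum_pair big_mkcond; apply: eq_bigr => x _.
rewrite /rbm_marg /rbm_prob /nu /restricted_weight /=; case: ifP => hx.
- by rewrite rsum_mull; apply: eq_bigr => y _ /=; rewrite ?hx /Rdiv; ring.
- by rewrite big1 // => y _ /=; rewrite ?hx; ring.
Qed.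

Lemma restricted_mass_pos : 0 < \rsum_(z : joint n m) nu z.
Proof.
apply: (rsum_pos (j := (x0, [ffun => true]))) => [z|].
  exact: restricted_weight_ge0.
rewrite /nu /restricted_weight /=.
have -> : agree_on S x0 x0 by apply/forallP => i; apply/implyP.
exact: exp_pos.
Qed.

Lemma cond_cov_formula u v :
  cond_cov J h g u v S x0 =
  ((\rsum_(z : joint n m) nu z) * (\rsum_(z : joint n m) (nu z * (spin (z.1 u) * spin (z.1 v)))) -
   (\rsum_(z : joint n m) (nu z * spin (z.1 u))) * (\rsum_(z : joint n m) (nu z * spin (z.1 v)))) /
  ((\rsum_(z : joint n m) nu z) * (\rsum_(z : joint n m) nu z)).
Proof.
have mass : \rsum_(x | agree_on S x x0) rbm_marg J h g x =
    (\rsum_(z : joint n m) nu z) / rbm_Z J h g.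
  rewrite -[LHS](eq_bigr _ (fun x _ => Rmult_1_r _)) cond_sumE.
  by congr (_ / _); apply: eq_bigr => z _; rewrite Rmult_1_r.
rewrite /cond_cov /cond_exp !cond_sumE mass.
have := restricted_mass_pos; have := rbm_Z_pos => *.
by field; lra.
Qed.

End Conditioning.

Lemma cond_cov_lower_bound (n m : nat) (J : 'I_n -> 'I_m -> R) (h : 'I_n -> R)
    (g : 'I_m -> R) (alpha lambda : R) (u v : 'I_n) (k : 'I_m) (S : {set 'I_n})
    (x0 : config n) :
  0 < alpha -> locally_consistent J h g alpha lambda -> u != v ->
  J u k <> 0 -> J v k <> 0 -> u \notin S -> v \notin S ->
  alpha ^ 2 * exp (- (12 * lambda)) <= cond_cov J h g u v S x0.
Proof.
move=> alpha_pos lc u_neq_v Juk Jvk uS vS.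
have := total_covariance_lower_bound (@four_functions_joint n m J)
  (restricted_weight_ge0 J h g S x0) (restricted_weight_lsm h g (proj1 lc) S x0)
  (@same_class_refl n m u v k) (@same_class_sym n m u v k) (@same_class_trans n m u v k)
  (@same_class_lattice n m J u v k) (joint_join_comm J)
  (shifted_spin_ge0 u) (shifted_spin_ge0 v) (shifted_spin_mono J u) (shifted_spin_mono J v)
  (fun p => class_cov_bound alpha_pos lc u_neq_v Juk Jvk uS vS (p := p)).
rewrite cond_cov_formula.
set nu := restricted_weight J h g S x0.
set N := \rsum_(z : joint n m) nu z.
set Euv := \rsum_(z : joint n m) (nu z * (spin (z.1 u) * spin (z.1 v))).
set Eu := \rsum_(z : joint n m) (nu z * spin (z.1 u)).
set Ev := \rsum_(z : joint n m) (nu z * spin (z.1 v)).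
have -> : \rsum_(z : joint n m) (nu z * (shifted_spin u z * shifted_spin v z)) =
    Euv + Eu + Ev + N.
  by rewrite -!big_split; apply: eq_bigr => z _; rewrite /shifted_spin /=; ring.
have -> : \rsum_(z : joint n m) (nu z * shifted_spin u z) = Eu + N.
  by rewrite -!big_split; apply: eq_bigr => z _; rewrite /shifted_spin /=; ring.
have -> : \rsum_(z : joint n m) (nu z * shifted_spin v z) = Ev + N.
  by rewrite -!big_split; apply: eq_bigr => z _; rewrite /shifted_spin /=; ring.
have N_pos : 0 < N := restricted_mass_pos J h g S x0.
move=> cov; apply: (Rmult_le_reg_r (N * N)); first exact: Rmult_lt_0_compat.
have -> : (N * Euv - Eu * Ev) / (N * N) * (N * N) = N * Euv - Eu * Ev by field; lra.
lra.
Qed.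

Unset Implicit Arguments.

Theorem mainTheorem3 (n m : nat) (J : 'I_n -> 'I_m -> R) (h : 'I_n -> R) (g : 'I_m -> R)
    (alpha lambda : R) :
  0 < alpha ->
  locally_consistent J h g alpha lambda ->
  forall (u v : 'I_n), u <> v ->
  (exists k : 'I_m, J u k <> 0 /\ J v k <> 0) ->
  forall S : {set 'I_n}, u \notin S -> v \notin S ->
  alpha ^ 2 * exp (- (12 * lambda)) <= avg_cond_cov J h g u v S.
Proof.
move=> alpha_pos lc u v /eqP u_neq_v [k [Juk Jvk]] S uS vS.
(* average the pointwise bound against the marginal law of X, of total mass 1 *)
rewrite -[X in X <= _]Rmult_1_l -(rbm_marg_total J h g) rsum_mull /avg_cond_cov.
apply: rsum_le => x0 _; apply: Rmult_le_compat_l; first exact: rbm_marg_ge0.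
exact: cond_cov_lower_bound alpha_pos lc u_neq_v Juk Jvk uS vS.
Qed.
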